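(* Let $\{a_n\},\{\rho_n\},\{\hat a_n\},\{\hat\rho_n\}$ ($n\ge1$) be sequences of positive numbers such that $\{\rho_n\}$ and $\{\hat\rho_n\}$ are strictly increasing with $\rho_n\to+\infty$, $\hat\rho_n\to+\infty$, and $\sum_{n\ge1}a_n\rho_n^{-2}<\infty$, $\sum_{n\ge1}\hat a_n\hat\rho_n^{-2}<\infty$. Let $\mu\in\mathbb R$, $\sigma\ge 0$ and let $\phi$ be the real meromorphic function \[ \phi(z)=\tfrac12\sigma^2z^2+\mu z+z^2\sum_{n\ge1}\frac{a_n}{\rho_n(\rho_n-z)}+z^2\sum_{n\ge1}\frac{\hat a_n}{\hat\rho_n(\hat\rho_n+z)}, \] (the Laplace exponent $\ln\mathbb E[e^{zX_1}]$ of the Lévy process $X$ with Gaussian coefficient $\sigma$, mean $\mathbb E[X_1]=\mu$ and Lévy density $\pi(x)=\mathbf 1(x>0)\sum_{n}a_n\rho_ne^{-\rho_nx}+\mathbf 1(x<0)\sum_n\hat a_n\hat\rho_ne^{\hat\rho_nx}$). Let $q>0$. Then the equation $\phi(z)=q$ has solutions $\{\zeta_n,-\hat\zeta_n\}_{n\ge1}$, where $\{\zeta_n\}_{n\ge1}$ and $\{\hat\zeta_n\}_{n\ge1}$ are sequences of positive numbers satisfying the interlacing property \[ 0<\zeta_1<\rho_1<\zeta_2<\rho_2<\cdots,\qquad 0<\hat\zeta_1<\hat\rho_1<\hat\zeta_2<\hat\rho_2<\cdots. \]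
   Context: $\mathbf 1(\cdot)$ denotes the indicator function. *)

From Stdlib Require Import Reals.
From Coquelicot Require Import Coquelicot.
Open Scope R_scope.

(* Sequences are indexed from 0: a 0 stands for a_1, rho 0 for rho_1, etc. *)

Definition phi_value (a rho ah rhoh : nat -> R) (mu sigma : R) (z w : C) : Prop :=
  exists S1 S2 : C,
    is_series (fun n => (RtoC (a n) / (RtoC (rho n) * (RtoC (rho n) - z)))%C) S1 /\
    is_series (fun n => (RtoC (ah n) / (RtoC (rhoh n) * (RtoC (rhoh n) + z)))%C) S2 /\
    w = (RtoC (sigma ^ 2 / 2) * (z * z) + RtoC mu * z + (z * z) * S1 + (z * z) * S2)%C.

Definition is_pole (rho rhoh : nat -> R) (z : C) : Prop :=
  exists n, z = RtoC (rho n) \/ z = RtoC (- rhoh n).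

(* On the real axis, off the poles and away from 0, phi(x) = q exactly when
   g(x) = (phi(x) - q) / x = sigma^2 x / 2 + mu + x T(x) + x T'(-x) - q / x
   vanishes, where T(x) = sum a_n / (rho_n (rho_n - x)) and T' is the same sum
   for the hatted data.  From x to y the function x T(x) increases by
   sum a_n (y - x) / ((rho_n - x) (rho_n - y)), whose terms are positive when
   no pole lies between x and y; so g is strictly increasing on each gap
   (rho_(n-1), rho_n), and the single term of rho_n (resp. of rho_(n-1), or
   -q/x on the first gap) drives it to +oo (resp. -oo) at the ends of the gap.
   Hence g has exactly one zero zeta_n in each gap.  The map z |-> -z swaps
   the two sides and gives the negative roots.  A non-real z = x + iy is never
   a root, since Im (conj z (phi(z) - q)) =
   |z|^2 (sigma^2 y / 2 + Im (z T(z)) + Im (z T'(-z))) + q y and every summand has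
   the sign of y. *)

From Stdlib Require Import Reals Lra Lia ClassicalEpsilon.
From Coquelicot Require Import Coquelicot.
Open Scope R_scope.

Lemma Series_nonneg (b : nat -> R) :
  (forall n, 0 <= b n) -> ex_series b -> 0 <= Series b.
Proof.
  intros Hb Hex.
  replace 0 with (Series (fun n => 0 * b n)) by (rewrite Series_scal_l; ring).
  apply Series_le; [intros n; rewrite Rmult_0_l; split; [lra | apply Hb] | exact Hex].
Qed.

Lemma Series_ge_term (b : nat -> R) (k : nat) :
  (forall n, 0 <= b n) -> ex_series b -> b k <= Series b.
Proof.
  intros Hb Hex.
  rewrite (Series_incr_n b (S k)) by (lia || assumption).
  assert (Htail : 0 <= Series (fun j => b (S k + j)%nat)).
  { apply Series_nonneg; [intros; apply Hb | apply (ex_series_incr_n b (S k)), Hex]. }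
  change (Init.Nat.pred (S k)) with k.
  destruct k as [|k]; [change (sum_f_R0 b 0) with (b 0%nat); lra|].
  change (sum_f_R0 b (S k)) with (sum_f_R0 b k + b (S k)).
  pose proof (cond_pos_sum b k Hb). lra.
Qed.

Lemma ex_series_Rmult_l (c : R) (u : nat -> R) :
  ex_series u -> ex_series (fun n => c * u n).
Proof. exact (ex_series_scal_l c u). Qed.

Lemma ex_series_Rminus (u v : nat -> R) :
  ex_series u -> ex_series v -> ex_series (fun n => u n - v n).
Proof. exact (ex_series_minus u v). Qed.

Lemma RtoC_eq_iff (x y : R) : RtoC x = RtoC y <-> x = y.
Proof. split; [apply RtoC_inj | intros ->; reflexivity]. Qed.

Lemma is_series_C_unique (h : nat -> C) (S T : C) : is_series h S -> is_series h T -> S = T.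
Proof. apply (filterlim_locally_unique (K := C_AbsRing) (V := C_NormedModule)). Qed.

Lemma is_series_RtoC (f : nat -> R) (L : R) :
  is_series f L -> is_series (fun n => RtoC (f n)) (RtoC L).
Proof.
  intros H. unfold is_series in *.
  apply filterlim_ext with (fun N => (sum_n f N, 0)).
  { intros N. induction N as [|N IH]; [now rewrite !sum_O|].
    rewrite !sum_Sn, <- IH. apply injective_projections; simpl; [reflexivity | ring]. }
  apply (filterlim_locally (U := C_UniformSpace)). intros eps.
  apply (filter_imp (fun N => ball L eps (sum_n f N))).
  - intros N HN. split; [exact HN | apply ball_center].
  - exact (proj1 (filterlim_locally (U := R_UniformSpace) _ _) H eps).
Qed.

Lemma is_series_Im (h : nat -> C) (S : C) :
  is_series h S -> is_series (fun n => Im (h n)) (Im S).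
Proof.
  intros H. unfold is_series in *.
  apply filterlim_ext with (fun N => Im (sum_n h N)).
  { intros N. induction N as [|N IH]; [now rewrite !sum_O | now rewrite !sum_Sn, <- IH]. }
  eapply filterlim_comp; [exact H|].
  destruct S as [s1 s2]. apply (continuous_snd (U := R_UniformSpace) (V := R_UniformSpace) s1 s2).
Qed.

Lemma Im_series_sign (h : nat -> C) (S : C) (y : R) :
  is_series h S -> (forall n, 0 <= y * Im (h n)) -> 0 <= y * Im S.
Proof.
  intros H Hn. apply is_series_Im, (is_series_scal_l y) in H.
  change (is_series (fun n => y * Im (h n)) (y * Im S)) in H.
  rewrite <- (is_series_unique _ _ H). apply Series_nonneg; [exact Hn | eexists; exact H].
Qed.

Lemma continuity_pt_lipschitz (f : R -> R) (x d K : R) : 0 < d ->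
  (forall y, Rabs (y - x) < d -> Rabs (f y - f x) <= K * Rabs (y - x)) ->
  continuity_pt f x.
Proof.
  intros Hd HK. apply continuity_pt_locally. intros eps.
  assert (HK1 : 0 < Rabs K + 1) by (pose proof (Rabs_pos K); lra).
  assert (Hd' : 0 < Rmin d (eps / (Rabs K + 1)))
    by (apply Rmin_glb_lt; [lra | apply Rdiv_lt_0_compat; [apply cond_pos | lra]]).
  exists (mkposreal _ Hd'). intros y Hy. change (Rabs (y - x) < Rmin d (eps / (Rabs K + 1))) in Hy.
  pose proof (Rmin_l d (eps / (Rabs K + 1))). pose proof (Rmin_r d (eps / (Rabs K + 1))).
  apply Rle_lt_trans with ((Rabs K + 1) * Rabs (y - x)).
  - apply Rle_trans with (1 := HK y ltac:(lra)).
    pose proof (Rle_abs K). pose proof (Rabs_pos (y - x)). nra.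
  - apply Rmult_lt_reg_r with (/ (Rabs K + 1)); [apply Rinv_0_lt_compat; lra|].
    field_simplify; lra.
Qed.

Record pole_sequence (a r : nat -> R) : Prop := {
  weight_pos : forall n, 0 < a n;
  pole_pos : forall n, 0 < r n;
  pole_increasing : forall n, r n < r (S n);
  pole_unbounded : is_lim_seq r p_infty;
  weights_summable : ex_series (fun n => a n / r n ^ 2) }.

Definition off_poles (r : nat -> R) (x : R) : Prop := forall n, r n <> x.

Definition same_side (r : nat -> R) (x y : R) : Prop := forall n, 0 < (r n - x) * (r n - y).

Definition pole_term (a r : nat -> R) (x : R) (n : nat) : R := a n / (r n * (r n - x)).

Definition pole_sum (a r : nat -> R) (x : R) : R := Series (pole_term a r x).

(* The [n]-th gap between poles is [(gap_lo r n, r n)]; the first one starts at [0]. *)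
Definition gap_lo (r : nat -> R) (n : nat) : R :=
  match n with O => 0 | S k => r k end.

Section PoleSums.

Variables a r : nat -> R.
Hypothesis P : pole_sequence a r.

Lemma pole_le n m : (n <= m)%nat -> r n <= r m.
Proof.
  induction 1; [lra|]. pose proof (pole_increasing a r P m). lra.
Qed.

Lemma pole_distance_bound x : off_poles r x ->
  exists c, 0 < c /\ forall n, c * r n <= Rabs (r n - x).
Proof.
  intros Hx. pose proof (pole_pos a r P) as Hr.
  destruct (proj2 (is_lim_seq_spec r p_infty) (pole_unbounded a r P) (2 * Rabs x)) as [N HN].
  assert (Hhead : forall K, exists c, 0 < c /\
    forall n, (n < K)%nat -> c * r n <= Rabs (r n - x)).
  { induction K as [|K [c [Hc HK]]]; [exists 1; split; [lra | intros; lia]|].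
    assert (HrK : 0 < Rabs (r K - x) / r K)
      by (apply Rdiv_lt_0_compat; [apply Rabs_pos_lt; specialize (Hx K); lra | apply Hr]).
    exists (Rmin c (Rabs (r K - x) / r K)). split; [apply Rmin_glb_lt; assumption|].
    intros n Hn. pose proof (Hr n).
    destruct (Nat.eq_dec n K) as [->|HnK].
    - apply Rle_trans with (Rabs (r K - x) / r K * r K).
      + apply Rmult_le_compat_r; [lra | apply Rmin_r].
      + right. field. lra.
    - apply Rle_trans with (c * r n); [apply Rmult_le_compat_r; [lra | apply Rmin_l]|].
      apply HK. lia. }
  destruct (Hhead N) as [c [Hc HK]].
  exists (Rmin c (1 / 2)). split; [apply Rmin_glb_lt; lra|].
  intros n. pose proof (Hr n).
  destruct (Nat.lt_ge_cases n N) as [HnN | HnN].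
  - apply Rle_trans with (c * r n); [apply Rmult_le_compat_r; [lra | apply Rmin_l] | auto].
  - (* far out, [r n >= 2 |x|] keeps [x] at distance at least [r n / 2] *)
    apply Rle_trans with (1 / 2 * r n); [apply Rmult_le_compat_r; [lra | apply Rmin_r]|].
    specialize (HN n HnN). pose proof (Rabs_triang_inv (r n) x).
    rewrite (Rabs_pos_eq (r n)) in *; lra.
Qed.

Lemma pole_term_bound x c n : 0 < c -> c * r n <= Rabs (r n - x) ->
  Rabs (pole_term a r x n) <= / c * (a n / r n ^ 2).
Proof.
  intros Hc Hn. unfold pole_term.
  pose proof (weight_pos a r P n). pose proof (pole_pos a r P n).
  assert (0 < c * r n) by (apply Rmult_lt_0_compat; lra).
  unfold Rdiv. rewrite Rabs_mult, Rabs_inv, Rabs_mult, (Rabs_pos_eq (a n)), (Rabs_pos_eq (r n)) by lra.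
  replace (/ c * (a n * / r n ^ 2)) with (a n * / (r n * (c * r n))) by (field; lra).
  apply Rmult_le_compat_l; [lra|].
  apply Rinv_le_contravar; [apply Rmult_lt_0_compat|apply Rmult_le_compat_l]; lra.
Qed.

Lemma ex_pole_sum x : off_poles r x -> ex_series (pole_term a r x).
Proof.
  intros Hx. destruct (pole_distance_bound x Hx) as [c [Hc Hdist]].
  apply (ex_series_le (K := R_AbsRing) (V := R_CompleteNormedModule)
           _ (fun n => / c * (a n / r n ^ 2))).
  - intros n. apply pole_term_bound; auto.
  - apply ex_series_Rmult_l, (weights_summable a r P).
Qed.

Definition pole_increment (x y : R) (n : nat) : R :=
  a n * (y - x) / ((r n - x) * (r n - y)).

Lemma pole_part_diff x y : off_poles r x -> off_poles r y ->
  y * pole_sum a r y - x * pole_sum a r x = Series (pole_increment x y).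
Proof.
  intros Hx Hy. unfold pole_sum.
  rewrite <- !Series_scal_l, <- Series_minus by (apply ex_series_Rmult_l, ex_pole_sum; auto).
  apply Series_ext. intros n. unfold pole_term, pole_increment.
  pose proof (pole_pos a r P n). specialize (Hx n). specialize (Hy n).
  field. repeat split; lra.
Qed.

Lemma ex_pole_increment x y : off_poles r x -> off_poles r y ->
  ex_series (pole_increment x y).
Proof.
  intros Hx Hy.
  apply (ex_series_ext (fun n => y * pole_term a r y n - x * pole_term a r x n)).
  - intros n. unfold pole_term, pole_increment. simpl.
    pose proof (pole_pos a r P n). specialize (Hx n). specialize (Hy n).
    field. repeat split; lra.
  - apply ex_series_Rminus; apply ex_series_Rmult_l, ex_pole_sum; auto.
Qed.

Lemma off_poles_same_side x y : same_side r x y -> off_poles r x /\ off_poles r y.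
Proof.
  intros H; split; intros n E; specialize (H n); rewrite E in H; lra.
Qed.

Lemma pole_increment_nonneg x y n : x < y -> same_side r x y -> 0 <= pole_increment x y n.
Proof.
  intros Hxy Hs. unfold pole_increment. pose proof (weight_pos a r P n). specialize (Hs n).
  apply Rlt_le, Rdiv_lt_0_compat; [apply Rmult_lt_0_compat|]; lra.
Qed.

Lemma pole_part_increment x y n : x < y -> same_side r x y ->
  pole_increment x y n <= y * pole_sum a r y - x * pole_sum a r x.
Proof.
  intros Hxy Hs. destruct (off_poles_same_side x y Hs) as [Hx Hy].
  rewrite pole_part_diff by assumption.
  apply Series_ge_term; [intros; apply pole_increment_nonneg | apply ex_pole_increment]; auto.
Qed.

Lemma pole_increment_bound x y c n : 0 < c ->
  c * r n <= Rabs (r n - x) -> c * r n / 2 <= Rabs (r n - y) ->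
  Rabs (pole_increment x y n) <= 2 / (c * c) * Rabs (y - x) * (a n / r n ^ 2).
Proof.
  intros Hc Hx Hy. unfold pole_increment.
  pose proof (weight_pos a r P n). pose proof (pole_pos a r P n).
  assert (0 < c * r n) by (apply Rmult_lt_0_compat; lra).
  unfold Rdiv. rewrite !Rabs_mult, Rabs_inv, Rabs_mult, (Rabs_pos_eq (a n)) by lra.
  replace (2 * / (c * c) * Rabs (y - x) * (a n * / r n ^ 2))
    with (a n * Rabs (y - x) * / ((c * r n) * (c * r n / 2))) by (field; lra).
  apply Rmult_le_compat_l; [apply Rmult_le_pos; [lra | apply Rabs_pos]|].
  apply Rinv_le_contravar; [apply Rmult_lt_0_compat|apply Rmult_le_compat]; lra.
Qed.

Lemma pole_part_continuous x : off_poles r x ->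
  continuity_pt (fun t => t * pole_sum a r t) x.
Proof.
  intros Hx. destruct (pole_distance_bound x Hx) as [c [Hc Hdist]].
  pose proof (pole_pos a r P) as Hr.
  apply (continuity_pt_lipschitz _ x (c * r 0%nat / 2)
           (2 / (c * c) * Series (fun n => a n / r n ^ 2))).
  { specialize (Hr 0%nat). apply Rdiv_lt_0_compat; [apply Rmult_lt_0_compat|]; lra. }
  intros y Hyx.
  assert (Hdisty : forall n, c * r n / 2 <= Rabs (r n - y)).
  { intros n. specialize (Hdist n). pose proof (pole_le 0 n (Nat.le_0_l n)).
    pose proof (Rabs_triang_inv (r n - x) (y - x)).
    replace (r n - x - (y - x)) with (r n - y) in * by ring. nra. }
  assert (Hy : off_poles r y).
  { intros n E. specialize (Hdisty n). rewrite E, Rminus_diag, Rabs_R0 in Hdisty.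
    specialize (Hr n). nra. }
  set (bound := fun n => 2 / (c * c) * Rabs (y - x) * (a n / r n ^ 2)).
  assert (Hbound : ex_series bound) by apply ex_series_Rmult_l, (weights_summable a r P).
  assert (Habs : ex_series (fun n => Rabs (pole_increment x y n))).
  { apply (ex_series_le (K := R_AbsRing) (V := R_CompleteNormedModule) _ bound); [|exact Hbound].
    intros n. change (norm (Rabs ?u)) with (Rabs (Rabs u)). rewrite Rabs_Rabsolu.
    apply pole_increment_bound; auto. }
  rewrite pole_part_diff by assumption.
  apply Rle_trans with (1 := Series_Rabs _ Habs).
  apply Rle_trans with (Series bound).
  - apply Series_le; [|exact Hbound]. intros n; split; [apply Rabs_pos|].
    apply pole_increment_bound; auto.
  - unfold bound. rewrite Series_scal_l. right; ring.
Qed.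

Lemma gap_lo_nonneg n : 0 <= gap_lo r n.
Proof. destruct n; simpl; [lra | apply Rlt_le, (pole_pos a r P)]. Qed.

Lemma gap_lo_lt n : gap_lo r n < r n.
Proof. destruct n; simpl; [apply (pole_pos a r P) | apply (pole_increasing a r P)]. Qed.

Lemma same_side_gap n x y : gap_lo r n < x < r n -> gap_lo r n < y < r n -> same_side r x y.
Proof.
  intros Hx Hy k. destruct (Nat.lt_ge_cases k n) as [Hk|Hk].
  - destruct n as [|n]; [lia|]. simpl in *. pose proof (pole_le k n ltac:(lia)). nra.
  - pose proof (pole_le n k Hk). nra.
Qed.

Lemma same_side_neg x y : x < 0 -> y < 0 -> same_side r x y.
Proof. intros Hx Hy k. pose proof (pole_pos a r P k). nra. Qed.

Lemma gap_of_pos x : 0 < x -> off_poles r x -> exists n, gap_lo r n < x < r n.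
Proof.
  intros Hx Hoff.
  destruct (proj2 (is_lim_seq_spec r p_infty) (pole_unbounded a r P) x) as [N HN].
  specialize (HN N (le_n N)). induction N as [|N IH]; [exists 0%nat; simpl; lra|].
  destruct (Rlt_le_dec x (r N)) as [HxN|HxN]; [exact (IH HxN)|].
  exists (S N). simpl. specialize (Hoff N). lra.
Qed.

End PoleSums.

Lemma hyperbola_unbounded (A w G : R) : 0 < A -> 0 < w ->
  exists e, 0 < e <= w / 2 /\ G <= A * (w - e) / (w * e).
Proof.
  intros HA Hw. set (M := Rabs G + 1).
  assert (HM : 0 < M) by (pose proof (Rabs_pos G); unfold M; lra).
  set (e := Rmin (w / 2) (A / (2 * M))).
  assert (He : 0 < e) by (apply Rmin_glb_lt; [lra | apply Rdiv_lt_0_compat; lra]).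
  assert (Hew : e <= w / 2) by apply Rmin_l.
  assert (HeA : 2 * M * e <= A).
  { apply Rle_trans with (2 * M * (A / (2 * M))); [apply Rmult_le_compat_l; [lra | apply Rmin_r]|].
    right; field; lra. }
  exists e. split; [lra|].
  apply Rmult_le_reg_r with (w * e); [apply Rmult_lt_0_compat; lra|].
  replace (A * (w - e) / (w * e) * (w * e)) with (A * (w - e)) by (field; lra).
  (* [G w e <= M w e <= A w / 2 <= A (w - e)] *)
  pose proof (Rle_abs G). assert (G <= M) by (unfold M; lra).
  assert (G * (w * e) <= M * (w * e)) by (apply Rmult_le_compat_r; [apply Rmult_le_pos|]; lra).
  nra.
Qed.

(* The function g of the header. *)
Definition secular (a r ah rh : nat -> R) (mu s q x : R) : R :=
  s ^ 2 * x / 2 + mu + x * pole_sum a r x + x * pole_sum ah rh (- x) - q / x.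

Lemma secular_opp a r ah rh mu s q x :
  secular ah rh a r (- mu) s q (- x) = - secular a r ah rh mu s q x.
Proof. unfold secular, Rdiv. rewrite Ropp_involutive, Rinv_opp. ring. Qed.

Section Secular.

Variables (a r ah rh : nat -> R) (mu s q : R).
Hypotheses (P : pole_sequence a r) (Ph : pole_sequence ah rh) (Hq : 0 < q).

Let g := secular a r ah rh mu s q.

Lemma secular_increment x y n : 0 < x -> x < y -> same_side r x y ->
  q * (y - x) / (x * y) + pole_increment a r x y n <= g y - g x.
Proof.
  intros Hx Hxy Hs. unfold g, secular.
  pose proof (pole_part_increment a r P x y n Hxy Hs).
  assert (Hsh : same_side rh (- y) (- x)) by (apply (same_side_neg ah rh Ph); lra).
  pose proof (pole_part_increment ah rh Ph (- y) (- x) 0 ltac:(lra) Hsh).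
  pose proof (pole_increment_nonneg ah rh Ph (- y) (- x) 0 ltac:(lra) Hsh).
  assert (0 <= s ^ 2 * (y - x) / 2) by (pose proof (pow2_ge_0 s); apply Rmult_le_pos; [apply Rmult_le_pos|]; lra).
  assert (q / x - q / y = q * (y - x) / (x * y)) by (field; lra).
  lra.
Qed.

Lemma secular_continuous x : 0 < x -> off_poles r x -> continuity_pt g x.
Proof.
  intros Hx Hoff. unfold g, secular.
  assert (Hh : continuity_pt (fun t => t * pole_sum ah rh (- t)) x).
  { apply (continuity_pt_ext (fun t => - ((- t) * pole_sum ah rh (- t)))); [intros t; ring|].
    apply continuity_pt_opp.
    apply (continuity_pt_comp (fun t => - t) (fun t => t * pole_sum ah rh t)).
    - apply continuity_pt_opp, continuity_pt_id.
    - apply (pole_part_continuous ah rh Ph). intros n E. pose proof (pole_pos ah rh Ph n). lra. }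
  assert (Hc : forall c, continuity_pt (fun _ => c) x)
    by (intros c; apply continuity_pt_const; intros u v; reflexivity).
  apply continuity_pt_minus; [repeat apply continuity_pt_plus|].
  - apply continuity_pt_mult; [apply continuity_pt_mult; [apply Hc | apply continuity_pt_id] | apply Hc].
  - apply Hc.
  - apply (pole_part_continuous a r P x Hoff).
  - exact Hh.
  - apply continuity_pt_mult; [apply Hc | apply continuity_pt_inv; [apply continuity_pt_id | lra]].
Qed.

Lemma secular_pos_below_pole n m : gap_lo r n < m < r n ->
  exists d, m < d < r n /\ 0 < g d.
Proof.
  intros Hm. pose proof (gap_lo_nonneg a r P n).
  destruct (hyperbola_unbounded (a n) (r n - m) (- g m) (weight_pos a r P n) ltac:(lra))
    as [e [He Hbig]].
  exists (r n - e). split; [lra|].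
  assert (Hs : same_side r m (r n - e)) by (apply (same_side_gap a r P n); lra).
  pose proof (secular_increment m (r n - e) n ltac:(lra) ltac:(lra) Hs).
  assert (0 < q * (r n - e - m) / (m * (r n - e)))
    by (apply Rdiv_lt_0_compat; apply Rmult_lt_0_compat; lra).
  replace (pole_increment a r m (r n - e) n) with (a n * (r n - m - e) / ((r n - m) * e)) in *
    by (unfold pole_increment; f_equal; [f_equal|]; ring).
  lra.
Qed.

Lemma secular_neg_above_gap_lo n m : gap_lo r n < m < r n ->
  exists c, gap_lo r n < c < m /\ g c < 0.
Proof.
  intros Hm. pose proof (gap_lo_nonneg a r P n).
  destruct n as [|k]; simpl in *.
  - (* near [0] the term [- q / x] blows up *)
    destruct (hyperbola_unbounded q m (g m + 1) Hq ltac:(lra)) as [e [He Hbig]].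
    exists e. split; [lra|].
    assert (Hs : same_side r e m) by (apply (same_side_gap a r P 0); simpl; lra).
    pose proof (secular_increment e m 0 ltac:(lra) ltac:(lra) Hs).
    pose proof (pole_increment_nonneg a r P e m 0 ltac:(lra) Hs).
    rewrite (Rmult_comm e m) in *. lra.
  - destruct (hyperbola_unbounded (a k) (m - r k) (g m) (weight_pos a r P k) ltac:(lra))
      as [e [He Hbig]].
    exists (r k + e). split; [lra|].
    assert (Hs : same_side r (r k + e) m) by (apply (same_side_gap a r P (S k)); simpl; lra).
    pose proof (secular_increment (r k + e) m k ltac:(lra) ltac:(lra) Hs).
    assert (0 < q * (m - (r k + e)) / ((r k + e) * m))
      by (apply Rdiv_lt_0_compat; apply Rmult_lt_0_compat; lra).
    replace (pole_increment a r (r k + e) m k) with (a k * (m - r k - e) / ((m - r k) * e)) in *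
      by (unfold pole_increment; f_equal; [f_equal|]; ring).
    lra.
Qed.

Lemma secular_root_in_gap n : exists x, gap_lo r n < x < r n /\ g x = 0.
Proof.
  pose proof (gap_lo_lt a r P n).
  set (m := (gap_lo r n + r n) / 2).
  destruct (secular_neg_above_gap_lo n m ltac:(unfold m; lra)) as [c [Hc Hgc]].
  destruct (secular_pos_below_pole n m ltac:(unfold m; lra)) as [d [Hd Hgd]].
  destruct (Ranalysis5.IVT_interv g c d) as [x [Hx Hgx]]; [|lra|assumption|assumption|].
  - intros t Ht. pose proof (gap_lo_nonneg a r P n).
    apply secular_continuous; [lra|].
    apply (off_poles_same_side r t t), (same_side_gap a r P n); lra.
  - exists x. split; [lra | exact Hgx].
Qed.

Lemma secular_root_unique n x y : gap_lo r n < x < r n -> gap_lo r n < y < r n ->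
  g x = 0 -> g y = 0 -> x = y.
Proof.
  pose proof (gap_lo_nonneg a r P n).
  assert (Hlt : forall u v, gap_lo r n < u < r n -> gap_lo r n < v < r n -> u < v -> g u < g v).
  { intros u v Hu Hv Huv. pose proof (same_side_gap a r P n u v Hu Hv) as Hs.
    pose proof (secular_increment u v 0 ltac:(lra) Huv Hs).
    pose proof (pole_increment_nonneg a r P u v 0 Huv Hs).
    assert (0 < q * (v - u) / (u * v)) by (apply Rdiv_lt_0_compat; apply Rmult_lt_0_compat; lra).
    lra. }
  intros Hx Hy Egx Egy.
  destruct (Rtotal_order x y) as [Hxy|[Hxy|Hxy]]; auto.
  - pose proof (Hlt x y Hx Hy Hxy). lra.
  - pose proof (Hlt y x Hy Hx Hxy). lra.
Qed.

Lemma secular_roots :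
  exists zeta : nat -> R, forall n, gap_lo r n < zeta n < r n /\ g (zeta n) = 0.
Proof. apply (choice (fun n x => gap_lo r n < x < r n /\ g x = 0)), secular_root_in_gap. Qed.

Lemma secular_zero_iff (zeta : nat -> R) :
  (forall n, gap_lo r n < zeta n < r n /\ g (zeta n) = 0) ->
  forall x, 0 < x -> off_poles r x -> (g x = 0 <-> exists n, x = zeta n).
Proof.
  intros Hzeta x Hx Hoff. split.
  - intros Hgx. destruct (gap_of_pos a r P x Hx Hoff) as [n Hn].
    exists n. apply (secular_root_unique n); [exact Hn | apply Hzeta | exact Hgx | apply Hzeta].
  - intros [n ->]. apply Hzeta.
Qed.

End Secular.

Definition laplace_exponent (a r ah rh : nat -> R) (mu s x : R) : R :=
  s ^ 2 / 2 * (x * x) + mu * x + x * x * pole_sum a r x + x * x * pole_sum ah rh (- x).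

Lemma laplace_exponent_eq_secular a r ah rh mu s q x : x <> 0 ->
  (laplace_exponent a r ah rh mu s x = q <-> secular a r ah rh mu s q x = 0).
Proof.
  intros Hx.
  assert (E : laplace_exponent a r ah rh mu s x - q = x * secular a r ah rh mu s q x)
    by (unfold laplace_exponent, secular; field; exact Hx).
  split; intros H.
  - apply (Rmult_eq_reg_l x); [rewrite <- E, H; ring | exact Hx].
  - apply Rminus_diag_uniq. rewrite E, H. ring.
Qed.

Lemma pole_term_RtoC (a r : nat -> R) (x : R) (n : nat) : r n <> 0 -> r n <> x ->
  (RtoC (a n) / (RtoC (r n) * (RtoC (r n) - RtoC x)))%C = RtoC (pole_term a r x n).
Proof.
  intros Hr Hx. unfold pole_term.
  rewrite <- RtoC_minus, <- RtoC_mult, <- RtoC_div; [reflexivity|].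
  apply Rmult_integral_contrapositive_currified; lra.
Qed.

Lemma phi_value_RtoC a rho ah rhoh mu sigma x w :
  pole_sequence a rho -> pole_sequence ah rhoh -> off_poles rho x -> off_poles rhoh (- x) ->
  (phi_value a rho ah rhoh mu sigma (RtoC x) w <->
   w = RtoC (laplace_exponent a rho ah rhoh mu sigma x)).
Proof.
  intros P Ph Hx Hxh.
  assert (H1 : is_series (fun n => RtoC (a n) / (RtoC (rho n) * (RtoC (rho n) - RtoC x)))%C
                 (RtoC (pole_sum a rho x))).
  { apply (is_series_ext (fun n => RtoC (pole_term a rho x n))).
    - intros n. symmetry. apply pole_term_RtoC; [apply Rgt_not_eq, (pole_pos a rho P) | apply Hx].
    - apply is_series_RtoC, Series_correct, (ex_pole_sum a rho P), Hx. }
  assert (H2 : is_series (fun n => RtoC (ah n) / (RtoC (rhoh n) * (RtoC (rhoh n) + RtoC x)))%C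
                 (RtoC (pole_sum ah rhoh (- x)))).
  { apply (is_series_ext (fun n => RtoC (pole_term ah rhoh (- x) n))).
    - intros n. rewrite <- pole_term_RtoC; [| apply Rgt_not_eq, (pole_pos ah rhoh Ph) | apply Hxh].
      rewrite RtoC_opp. f_equal. field.
    - apply is_series_RtoC, Series_correct, (ex_pole_sum ah rhoh Ph), Hxh. }
  assert (Hw : RtoC (laplace_exponent a rho ah rhoh mu sigma x) =
    (RtoC (sigma ^ 2 / 2) * (RtoC x * RtoC x) + RtoC mu * RtoC x
     + RtoC x * RtoC x * RtoC (pole_sum a rho x)
     + RtoC x * RtoC x * RtoC (pole_sum ah rhoh (- x)))%C)
    by (unfold laplace_exponent; rewrite <- !RtoC_mult, <- !RtoC_plus; reflexivity).
  split.
  - intros [S1 [S2 [HS1 [HS2 ->]]]].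
    rewrite (is_series_C_unique _ _ _ HS1 H1), (is_series_C_unique _ _ _ HS2 H2). exact (eq_sym Hw).
  - intros ->. exists (RtoC (pole_sum a rho x)), (RtoC (pole_sum ah rhoh (- x))). auto.
Qed.

Lemma pole_term_Im_sign (a r : R) (z : C) : 0 < a -> r <> 0 ->
  0 <= Im z * Im (z * (RtoC a / (RtoC r * (RtoC r - z))))%C.
Proof.
  intros Ha Hr. destruct z as [x y]. simpl Im at 1.
  destruct (Req_dec y 0) as [->|Hy]; [lra|].
  assert (Hd : 0 < (r - x) ^ 2 + y ^ 2)
    by (apply Rplus_le_lt_0_compat; [apply pow2_ge_0 | apply pow2_gt_0; exact Hy]).
  (* [z / (r (r - z)) = 1 / (r - z) - 1 / r] has imaginary part [y / |r - z|^2] *)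
  replace (Im ((x, y) * (RtoC a / (RtoC r * (RtoC r - (x, y)))))%C)
    with (a * y / ((r - x) ^ 2 + y ^ 2)).
  - replace (y * (a * y / ((r - x) ^ 2 + y ^ 2))) with (a * (y * y) / ((r - x) ^ 2 + y ^ 2))
      by (field; lra).
    apply Rlt_le, Rdiv_lt_0_compat; [apply Rmult_lt_0_compat; [lra | nra] | exact Hd].
  - unfold Cdiv, Cinv, Cmult, Cminus, Cplus, Copp, RtoC. simpl.
    assert (0 < r * r) by nra.
    field. split; apply Rgt_not_eq; [|nra].
    replace (r * (r + - x) * (r * (r + - x)) + r * - y * (r * - y))
      with (r * r * ((r - x) ^ 2 + y ^ 2)) by ring.
    apply Rmult_lt_0_compat; assumption.
Qed.

Lemma phi_value_nonreal a rho ah rhoh mu sigma q z :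
  (forall n, 0 < a n) -> (forall n, 0 < rho n) -> (forall n, 0 < ah n) -> (forall n, 0 < rhoh n) ->
  0 < q -> Im z <> 0 -> ~ phi_value a rho ah rhoh mu sigma z (RtoC q).
Proof.
  intros Ha Hrho Hah Hrhoh Hq Hy [S1 [S2 [H1 [H2 E]]]].
  assert (I1 : 0 <= Im z * Im (z * S1)%C).
  { apply (Im_series_sign (fun n => z * (RtoC (a n) / (RtoC (rho n) * (RtoC (rho n) - z))))%C).
    - exact (is_series_scal_l (K := C_AbsRing) (V := C_NormedModule) z _ _ H1).
    - intros n. apply pole_term_Im_sign; [apply Ha | apply Rgt_not_eq, Hrho]. }
  assert (I2 : 0 <= Im z * Im (z * S2)%C).
  { apply (Im_series_sign (fun n => z * (RtoC (ah n) / (RtoC (rhoh n) * (RtoC (rhoh n) + z))))%C).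
    - exact (is_series_scal_l (K := C_AbsRing) (V := C_NormedModule) z _ _ H2).
    - (* the terms of the second sum are those of the first with the pole [- rhoh n] *)
      intros n. replace (RtoC (rhoh n) * (RtoC (rhoh n) + z))%C
        with (RtoC (- rhoh n) * (RtoC (- rhoh n) - z))%C by (rewrite RtoC_opp; ring).
      apply pole_term_Im_sign; [apply Hah | apply Rlt_not_eq; specialize (Hrhoh n); lra]. }
  rewrite <- !(Cmult_assoc z z) in E.
  apply (f_equal (fun c => Im (Cconj z * c))) in E.
  destruct z as [x y], (((x, y) * S1)%C) as [p1 i1], (((x, y) * S2)%C) as [p2 i2].
  simpl in Hy, I1, I2. unfold Cconj, Cmult, Cplus, RtoC in E. simpl in E.
  assert (E2 : - q * (y * y) =
    (x * x + y * y) * (sigma ^ 2 / 2 * (y * y) + y * i1 + y * i2)).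
  { transitivity (y * (x * 0 + - y * q)); [ring | rewrite E; field]. }
  assert (0 <= (x * x + y * y) * (sigma ^ 2 / 2 * (y * y) + y * i1 + y * i2)).
  { pose proof (pow2_ge_0 sigma). apply Rmult_le_pos; nra. }
  assert (0 < q * (y * y)) by (apply Rmult_lt_0_compat; nra).
  lra.
Qed.

Lemma laplace_exponent_roots a rho ah rhoh mu sigma q (zeta zetah : nat -> R) :
  pole_sequence a rho -> pole_sequence ah rhoh -> 0 < q ->
  (forall n, gap_lo rho n < zeta n < rho n /\ secular a rho ah rhoh mu sigma q (zeta n) = 0) ->
  (forall n, gap_lo rhoh n < zetah n < rhoh n /\
     secular ah rhoh a rho (- mu) sigma q (zetah n) = 0) ->
  forall x, off_poles rho x -> off_poles rhoh (- x) ->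
  (laplace_exponent a rho ah rhoh mu sigma x = q <-> exists n, x = zeta n \/ x = - zetah n).
Proof.
  intros P Ph Hq Hzeta Hzetah x Hx Hxh.
  assert (Hpos : forall n, 0 < zeta n /\ 0 < zetah n).
  { intros n. pose proof (gap_lo_nonneg a rho P n). pose proof (gap_lo_nonneg ah rhoh Ph n).
    pose proof (Hzeta n). pose proof (Hzetah n). lra. }
  pose proof (secular_opp a rho ah rhoh mu sigma q x) as Hopp.
  destruct (Rtotal_order x 0) as [Hneg|[->|Hposx]].
  - rewrite laplace_exponent_eq_secular by lra. split.
    + intros H. destruct (proj1 (secular_zero_iff ah rhoh a rho (- mu) sigma q Ph P Hq zetah
        Hzetah (- x) ltac:(lra) Hxh)) as [n Hn]; [lra|].
      exists n. right. lra.
    + intros [n [E|E]]; [pose proof (Hpos n); lra|].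
      enough (secular ah rhoh a rho (- mu) sigma q (- x) = 0) by lra.
      apply (secular_zero_iff ah rhoh a rho (- mu) sigma q Ph P Hq zetah Hzetah (- x));
        [lra | exact Hxh | exists n; lra].
  - unfold laplace_exponent. split.
    + intros H. exfalso. lra.
    + intros [n [E|E]]; pose proof (Hpos n); lra.
  - rewrite laplace_exponent_eq_secular by lra.
    rewrite (secular_zero_iff a rho ah rhoh mu sigma q P Ph Hq zeta Hzeta x Hposx Hx). split.
    + intros [n Hn]. exists n. left. exact Hn.
    + intros [n [E|E]]; [exists n; exact E | pose proof (Hpos n); lra].
Qed.

Theorem proposition3
  (a rho ah rhoh : nat -> R) (mu sigma q : R)
  (Ha : forall n, 0 < a n) (Hrho : forall n, 0 < rho n)
  (Hah : forall n, 0 < ah n) (Hrhoh : forall n, 0 < rhoh n)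
  (Hrho_inc : forall n, rho n < rho (S n))
  (Hrhoh_inc : forall n, rhoh n < rhoh (S n))
  (Hrho_lim : is_lim_seq rho p_infty)
  (Hrhoh_lim : is_lim_seq rhoh p_infty)
  (Hsum : ex_series (fun n => a n / (rho n ^ 2)))
  (Hsumh : ex_series (fun n => ah n / (rhoh n ^ 2)))
  (Hsigma : 0 <= sigma) (Hq : 0 < q) :
  exists zeta zetah : nat -> R,
    (forall n, 0 < zeta n) /\ (forall n, 0 < zetah n) /\
    (forall n, zeta n < rho n /\ rho n < zeta (S n)) /\
    (forall n, zetah n < rhoh n /\ rhoh n < zetah (S n)) /\
    (forall z : C, ~ is_pole rho rhoh z ->
       (phi_value a rho ah rhoh mu sigma z (RtoC q) <->
        exists n, z = RtoC (zeta n) \/ z = RtoC (- zetah n))).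
Proof.
  assert (P : pole_sequence a rho) by (constructor; assumption).
  assert (Ph : pole_sequence ah rhoh) by (constructor; assumption).
  destruct (secular_roots a rho ah rhoh mu sigma q P Ph Hq) as [zeta Hzeta].
  destruct (secular_roots ah rhoh a rho (- mu) sigma q Ph P Hq) as [zetah Hzetah].
  exists zeta, zetah. split; [|split; [|split; [|split]]].
  - intros n. pose proof (gap_lo_nonneg _ _ P n). pose proof (Hzeta n). lra.
  - intros n. pose proof (gap_lo_nonneg _ _ Ph n). pose proof (Hzetah n). lra.
  - intros n. split; [apply Hzeta | apply (Hzeta (S n))].
  - intros n. split; [apply Hzetah | apply (Hzetah (S n))].
  - intros [x y] Hz. destruct (Req_dec y 0) as [->|Hy].
    + change (x, 0) with (RtoC x) in *.
      assert (Hx : off_poles rho x) by (intros n E; apply Hz; exists n; left; rewrite E; reflexivity).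
      assert (Hxh : off_poles rhoh (- x))
        by (intros n E; apply Hz; exists n; right; rewrite E, Ropp_involutive; reflexivity).
      rewrite (phi_value_RtoC a rho ah rhoh mu sigma x _ P Ph Hx Hxh), RtoC_eq_iff.
      setoid_rewrite RtoC_eq_iff.
      rewrite <- (laplace_exponent_roots a rho ah rhoh mu sigma q zeta zetah P Ph Hq
                    Hzeta Hzetah x Hx Hxh).
      split; apply eq_sym.
    + split.
      * intros H. exfalso. exact (phi_value_nonreal _ _ _ _ _ _ _ (x, y) Ha Hrho Hah Hrhoh Hq Hy H).
      * intros [n [E|E]]; injection E; intros; contradiction.
Qed.
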